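(* Let $F$ (of size $N$) and $G$ (of size $M$) be Fourier matrices. (a) If $\gcd(M,N)=1$, then the number of entries of $F\otimes G$ equal to $1$ is the product of the number of entries of $F$ equal to $1$ and the number of entries of $G$ equal to $1$ (equivalently, the multiplicity of $1$ in the spectrum of $\mathcal I_{(MN)^{-1/2}F\otimes G}$ is the product of those for $\mathcal I_{N^{-1/2}F}$ and $\mathcal I_{M^{-1/2}G}$); that is, $\mathbf D(F\otimes G)=\mathbf D(F)\cdot\mathbf D(G)$. (b) If $\gcd(M,N)>1$, then $\mathbf D(F\otimes G)>\mathbf D(F)\cdot\mathbf D(G)$.
   Context: For $n\ge1$, $F_n$ is the $n\times n$ matrix with entries $e^{2\pi i\,jk/n}$, $j,k\in\{0,\dots,n-1\}$; a Fourier matrix is a Kronecker product $F_{N_1}\otimes\cdots\otimes F_{N_r}$. For a unitary $W$ with no zero entries, $\mathcal I_W=\mathcal C_W^{-1}\mathcal D_W$ where $\mathcal C_W(X)=(X\circ W)W^*$, $\mathcal D_W(X)=W(\overline X\circ W)^*$ ($\circ$ entrywise product). For a rescaled unitary $V$ with no zero entries, $\mathbf D(V)=\dim_{\mathbb R}\{iR\circ V:\ R\text{ real},\ (iR\circ V)V^*\text{ antihermitian}\}$; for a Fourier matrix this equals the number of its entries equal to $1$. *)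

From HB Require Import structures.
From mathcomp Require Import all_boot all_order all_algebra.
From mathcomp Require Import complex mxtens.
From mathcomp Require Import reals trigo.
Set Implicit Arguments. Unset Strict Implicit. Unset Printing Implicit Defensive.
Import Order.TTheory GRing.Theory Num.Theory.
Local Open Scope ring_scope.
Local Open Scope complex_scope.

Section Fourier.
Variable R : realType.
Local Notation C := R[i].

Definition cexp (x : R) : C := cos x +i* sin x.

Definition Fmat (n : nat) : 'M[C]_n :=
  \matrix_(j < n, k < n) cexp (2 * pi * (j * k)%:R / n%:R).

(* Fourier matrix F_{N_1} (x) ... (x) F_{N_r} of size N_1 * ... * N_r
   (Kronecker product: mxtens's A *t B, row index i*p + k). *)
Fixpoint fourier (ns : seq nat) : 'M[C]_(foldr muln 1%N ns) :=
  match ns return 'M[C]_(foldr muln 1%N ns) with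
  | [::] => 1%:M
  | n :: ns' => Fmat n *t fourier ns'
  end.

Definition adjmx n (A : 'M[C]_n) : 'M[C]_n := (map_mx conjc A)^T.

Definition hadamard n (A B : 'M[C]_n) : 'M[C]_n := \matrix_(i, j) (A i j * B i j).

(* For a real matrix Rm, the defect X + X^* of X = (i Rm o V) V^* from being
   antihermitian, encoded by its real and imaginary parts. *)
Definition antiherm_defect n (V : 'M[C]_n) (Rm : 'M[R]_n) : 'M[R]_n * 'M[R]_n :=
  let X := hadamard (map_mx (fun r => 0 +i* r) Rm) V *m adjmx V in
  let H := X + adjmx X in
  (map_mx (@complex.Re R) H, map_mx (@complex.Im R) H).

(* D(V) = dim_R { i R o V : R real, (i R o V) V^* antihermitian }.
   Since R |-> i R o V is R-linear and injective when V has no zero entries,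
   this is the dimension of the real space of such real matrices R, i.e. the
   kernel of the (R-linear) map antiherm_defect V. *)
Definition Ddim n (V : 'M[C]_n) : nat := \dim (lker (linfun (antiherm_defect V))).

End Fourier.

(* The Fourier matrices are character tables of finite abelian groups: symmetric, with
   unimodular entries, with rows closed under entrywise product and conjugation, and with
   orthogonal rows.  For such a table W the real-linear bijection R |-> W R W turns the
   condition "(iR o W) W^* is antihermitian" into "W R W vanishes wherever W is not 1",
   so D(W) is the number of entries of W equal to 1.  An entry x y of F (x) G equals 1
   with x an N-th and y an M-th root of unity; if gcd(M, N) = 1 this forces x = y = 1,
   while a common prime factor p provides the entries e^{2 pi i/p} of F and
   e^{-2 pi i/p} of G, whose product is an extra 1. *)

From HB Require Import structures.
From mathcomp Require Import all_boot all_order all_algebra.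
From mathcomp Require Import complex mxtens.
From mathcomp Require Import reals trigo.
From mathcomp Require Import ring lra.
Set Implicit Arguments. Unset Strict Implicit. Unset Printing Implicit Defensive.
Import Order.TTheory GRing.Theory Num.Theory.
Local Open Scope ring_scope.
Local Open Scope complex_scope.

Section ComplexExponential.
Variable R : realType.

Lemma cexpD (x y : R) : cexp (x + y) = cexp x * cexp y.
Proof.
rewrite /cexp cosD sinD; apply/eqP; rewrite eq_complex /=.
by apply/andP; split; apply/eqP; ring.
Qed.

Lemma cexp0 : cexp 0 = 1 :> R[i].
Proof. by rewrite /cexp cos0 sin0. Qed.

Lemma cexp_mulconj (x : R) : cexp x * conjc (cexp x) = 1.
Proof.
apply/eqP; rewrite eq_complex /=; apply/andP; split; apply/eqP; last by ring.
by rewrite -(cos2Dsin2 x); ring.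
Qed.

Lemma cexpMn (x : R) (k : nat) : cexp (x * k%:R) = cexp x ^+ k.
Proof.
elim: k => [|k IHk]; first by rewrite mulr0 cexp0 expr0.
by rewrite -addn1 natrD mulrDr mulr1 cexpD IHk exprD expr1.
Qed.

Lemma cexp_2piMn (m : nat) : cexp (2 * pi * m%:R : R) = 1.
Proof.
have -> : 2 * pi * m%:R = 0 + (pi *+ 2) *+ m :> R.
  by rewrite add0r -mulrnA -[pi *+ _]mulr_natl natrM; ring.
by rewrite /cexp (periodicn (@cosD2pi R)) (periodicn (@sinD2pi R)) cos0 sin0.
Qed.

Lemma cexp_neq1 (x : R) : 0 < x < pi *+ 2 -> cexp x != 1.
Proof.
move=> /andP[x_gt0 x_lt2pi]; rewrite /cexp eq_complex /= negb_and; apply/orP; left.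
have pi_itv : (0 : R) \in `[0, pi] by rewrite in_itv /= lexx pi_ge0.
have [x_le_pi | pi_lt_x] := lerP x pi.
  have : cos x < cos 0 by rewrite ltr_cos // in_itv /= (ltW x_gt0) x_le_pi.
  by rewrite cos0 => /lt_eqF ->.
have : cos (pi *+ 2 - x) < cos 0.
  rewrite ltr_cos // ?subr_gt0 // in_itv /= subr_ge0 (ltW x_lt2pi) /=.
  by rewrite lerBlDl mulr2n lerD2r ltW.
by rewrite cos0 cosB cos2pi sin2pi mul0r addr0 mul1r => /lt_eqF ->.
Qed.

End ComplexExponential.

Section ComplexParts.
Variable R : realType.

Lemma conjcM (x y : R[i]) : conjc (x * y) = conjc x * conjc y.
Proof. exact: rmorphM. Qed.

Lemma conjc_sum (I : Type) (r : seq I) (P : pred I) (F : I -> R[i]) :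
  conjc (\sum_(i <- r | P i) F i) = \sum_(i <- r | P i) conjc (F i).
Proof. exact: rmorph_sum. Qed.

Lemma ReMD (a : R) (z w : R[i]) :
  complex.Re (a%:C * z + w) = a * complex.Re z + complex.Re w.
Proof. by case: z => x y; case: w => u v /=; ring. Qed.

Lemma ImMD (a : R) (z w : R[i]) :
  complex.Im (a%:C * z + w) = a * complex.Im z + complex.Im w.
Proof. by case: z => x y; case: w => u v /=; ring. Qed.

Lemma complex_eq0 (z : R[i]) : complex.Re z = 0 -> complex.Im z = 0 -> z = 0.
Proof. by case: z => x y /= -> ->. Qed.

Lemma ReDIm_conj_eq0 (z : R[i]) :
  complex.Re z + complex.Im z = 0 ->
  complex.Re (conjc z) + complex.Im (conjc z) = 0 -> z = 0.
Proof. by case: z => x y /= h1 h2; apply: complex_eq0 => /=; lra. Qed.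

End ComplexParts.

(* The rows of [W] are the characters of a finite abelian group on ['I_n], whose
   product and inverse are [s] and [t]. *)
Definition char_table (R : realType) n (W : 'M[R[i]]_n) : Prop :=
  [/\ forall i j, W i j = W j i,
      forall i j, W i j * conjc (W i j) = 1,
      exists s : 'I_n -> 'I_n -> 'I_n, forall a b c, W (s a b) c = W a c * W b c,
      exists t : 'I_n -> 'I_n, forall a c, W (t a) c = conjc (W a c) &
      forall a b, \sum_c W a c * conjc (W b c) = (a == b)%:R * n%:R ].

Section RootsOfUnity.
Variables (R : realType) (n : nat).
Hypothesis n_gt0 : (0 < n)%N.

Definition zeta (m : nat) : R[i] := cexp (2 * pi * m%:R / n%:R).

Lemma FmatE j k : Fmat R n j k = zeta (j * k).
Proof. by rewrite mxE. Qed.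

Lemma zeta0 : zeta 0 = 1.
Proof. by rewrite /zeta mulr0 mul0r cexp0. Qed.

Lemma zetaD a b : zeta (a + b) = zeta a * zeta b.
Proof. by rewrite /zeta -cexpD natrD !mulrDr mulrDl. Qed.

Lemma zeta_mulconj m : zeta m * conjc (zeta m) = 1.
Proof. exact: cexp_mulconj. Qed.

Lemma zetaMn k : zeta (k * n) = 1.
Proof. by rewrite /zeta natrM mulrA mulfK ?cexp_2piMn // pnatr_eq0 -lt0n. Qed.

Lemma zeta_mod m : zeta m = zeta (m %% n).
Proof. by rewrite {1}(divn_eq m n) zetaD zetaMn mul1r. Qed.

Lemma zetaM d c : zeta (d * c) = zeta d ^+ c.
Proof.
by rewrite /zeta -cexpMn; congr cexp; rewrite natrM; field; rewrite pnatr_eq0 -lt0n.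
Qed.

Lemma zeta_neq1 d : (0 < d < n)%N -> zeta d != 1.
Proof.
move=> /andP[d_gt0 d_lt_n]; apply: cexp_neq1; have pi_gt0 := pi_gt0 R.
have hd : (d%:R : R) < n%:R by rewrite ltr_nat.
have hd0 : (0 : R) < d%:R by rewrite ltr0n.
have hn0 : (0 : R) < n%:R by rewrite ltr0n.
apply/andP; split; first by rewrite divr_gt0 // mulr_gt0 //; lra.
by rewrite ltr_pdivrMr // mulr2n; nra.
Qed.

Lemma Fmat_row_orthogonal (a b : 'I_n) : (b < a)%N ->
  \sum_c Fmat R n a c * conjc (Fmat R n b c) = 0.
Proof.
move=> b_lt_a; set z := zeta (a - b).
have termE c : Fmat R n a c * conjc (Fmat R n b c) = z ^+ c.
  rewrite !FmatE -zetaM -[in zeta (a * c)](subnK (ltnW b_lt_a)) mulnDl zetaD.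
  by rewrite -mulrA zeta_mulconj mulr1.
have z_neq1 : z != 1.
  by rewrite zeta_neq1 // subn_gt0 b_lt_a (leq_ltn_trans (leq_subr _ _)).
have /eqP : (z - 1) * \sum_(c < n) z ^+ c = 0 by rewrite -subrX1 -zetaM zetaMn subrr.
rewrite mulf_eq0 subr_eq0 (negPf z_neq1) => /eqP geom_sum0.
under eq_bigr do rewrite termE.
exact: geom_sum0.
Qed.

Lemma Fmat_char_table : char_table (Fmat R n).
Proof.
split.
- by move=> i j; rewrite !FmatE mulnC.
- by move=> i j; rewrite FmatE zeta_mulconj.
- exists (fun a b => Ordinal (ltn_pmod (a + b) n_gt0)) => a b c.
  by rewrite !FmatE /= -zetaD -mulnDl zeta_mod [in RHS]zeta_mod modnMml.
- exists (fun a => Ordinal (ltn_pmod (n - a) n_gt0)) => a c.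
  have zeta_inv : Fmat R n (Ordinal (ltn_pmod (n - a) n_gt0)) c * zeta (a * c) = 1.
    rewrite FmatE /= -zetaD -mulnDl zeta_mod -modnMml modnDml subnK; last exact: ltnW.
    by rewrite modnn mul0n mod0n zeta0.
  by rewrite [in RHS]FmatE -[LHS]mulr1 -(zeta_mulconj (a * c)) mulrA zeta_inv mul1r.
- move=> a b; have [-> | a_neq_b] := eqVneq a b.
    under eq_bigr do rewrite FmatE zeta_mulconj.
    by rewrite sumr_const card_ord mul1r.
  rewrite mul0r; case: (ltngtP a b) => [a_lt_b | b_lt_a | /val_inj a_eq_b].
  + rewrite -[LHS]conjcK conjc_sum.
    under eq_bigr do rewrite conjcM conjcK mulrC.
    by rewrite Fmat_row_orthogonal // rmorph0.
  + exact: Fmat_row_orthogonal.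
  + by rewrite a_eq_b eqxx in a_neq_b.
Qed.

End RootsOfUnity.

Lemma sum_mxtens_index (V : nmodType) m p (F : 'I_(m * p) -> V) :
  \sum_k F k = \sum_(i < m) \sum_(j < p) F (mxtens_index (i, j)).
Proof.
rewrite pair_big /= (reindex (@mxtens_index m p)) /=; first by apply: eq_bigr => [[]].
by exists (@mxtens_unindex m p) => x _; rewrite ?mxtens_indexK ?mxtens_unindexK.
Qed.

Section CharTableKron.
Variable R : realType.

Lemma char_table_tens m p (A : 'M[R[i]]_m) (B : 'M[R[i]]_p) :
  char_table A -> char_table B -> char_table (A *t B).
Proof.
case=> symA unitA [sA HsA] [tA HtA] orthA; case=> symB unitB [sB HsB] [tB HtB] orthB.
pose unidx := @mxtens_unindex m p.
split.
- move=> i j; case: (mxtens_indexP i) => i1 i2; case: (mxtens_indexP j) => j1 j2.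
  by rewrite !tensmxE symA symB.
- move=> i j; case: (mxtens_indexP i) => i1 i2; case: (mxtens_indexP j) => j1 j2.
  by rewrite !tensmxE rmorphM /= mulrACA unitA unitB mulr1.
- exists (fun x y => mxtens_index (sA (unidx x).1 (unidx y).1, sB (unidx x).2 (unidx y).2)).
  move=> a b c; case: (mxtens_indexP a) => a1 a2; case: (mxtens_indexP b) => b1 b2.
  case: (mxtens_indexP c) => c1 c2.
  by rewrite /unidx !mxtens_indexK /= !tensmxE HsA HsB mulrACA.
- exists (fun x => mxtens_index (tA (unidx x).1, tB (unidx x).2)).
  move=> a c; case: (mxtens_indexP a) => a1 a2; case: (mxtens_indexP c) => c1 c2.
  by rewrite /unidx !mxtens_indexK /= !tensmxE HtA HtB rmorphM.
- move=> a b; case: (mxtens_indexP a) => a1 a2; case: (mxtens_indexP b) => b1 b2.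
  rewrite sum_mxtens_index.
  under eq_bigr do under eq_bigr do rewrite !tensmxE rmorphM /= mulrACA.
  under eq_bigr do rewrite -mulr_sumr.
  rewrite -mulr_suml orthA orthB (inj_eq (can_inj (@mxtens_indexK m p))) xpair_eqE.
  by rewrite -mulnb !natrM mulrACA.
Qed.

Lemma char_table1 : char_table (1%:M : 'M[R[i]]_1).
Proof.
have entry1 (x y : 'I_1) : (1%:M : 'M[R[i]]_1) x y = 1 by rewrite [x]ord1 [y]ord1 mxE.
split.
- by move=> i j; rewrite !entry1.
- by move=> i j; rewrite entry1 rmorph1 mulr1.
- by exists (fun _ _ => ord0) => a b c; rewrite !entry1 mulr1.
- by exists id => a c; rewrite !entry1 rmorph1.
- by move=> a b; rewrite big_ord1 !entry1 rmorph1 mulr1 [a]ord1 [b]ord1 eqxx mul1r.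
Qed.

Lemma fourier_char_table ns : all (fun n => 0 < n)%N ns -> char_table (fourier R ns).
Proof.
elim: ns => [_ | n ns IHns] /=; first exact: char_table1.
by move=> /andP[n_gt0 /IHns ?]; apply: char_table_tens => //; apply: Fmat_char_table.
Qed.

End CharTableKron.

Definition ones (K : pzRingType) m n (A : 'M[K]_(m, n)) : {set 'I_m * 'I_n} :=
  [set ij | A ij.1 ij.2 == 1].

Section DeltaSpan.
Variables (K : fieldType) (m n : nat).

Definition delta_span (E : {set 'I_m * 'I_n}) : {vspace 'M[K]_(m, n)} :=
  <<[seq delta_mx ij.1 ij.2 | ij <- enum E]>>%VS.

Lemma memv_delta_span (E : {set 'I_m * 'I_n}) (Y : 'M[K]_(m, n)) :
  (forall i j, (i, j) \notin E -> Y i j = 0) -> Y \in delta_span E.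
Proof.
move=> Y_supp; rewrite (matrix_sum_delta Y) pair_big /=.
rewrite (bigID (mem E)) /= [X in _ + X]big1 ?addr0; last first.
  by move=> [i j] /= ijNE; rewrite Y_supp ?scale0r.
apply: memv_suml => ij ijE; apply/memvZ/memv_span.
by apply/mapP; exists ij; rewrite ?mem_enum.
Qed.

Lemma free_delta_seq (s : seq ('I_m * 'I_n)) :
  uniq s -> free [seq (delta_mx ij.1 ij.2 : 'M[K]_(m, n)) | ij <- s].
Proof.
elim: s => [_ | ij s IHs] /=; first exact: nil_free.
case/andP => ijNs s_uniq; rewrite free_cons IHs // andbT.
set ds := [seq delta_mx ij.1 ij.2 | ij <- s].
apply/negP => /(coord_span (X := in_tuple ds)) ij_span.
have := congr1 (fun Y : 'M[K]_(m, n) => Y ij.1 ij.2) ij_span.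
rewrite /= mxE !eqxx summxE big1 => [/eqP | k _]; first by rewrite oner_eq0.
have k_lt : (k < size s)%N.
  by rewrite -(size_map (fun ij => delta_mx ij.1 ij.2 : 'M[K]_(m, n))).
rewrite mxE (nth_map ij) // mxE.
case: eqP => [e1|]; case: eqP => [e2|] //=; rewrite ?mulr0 //.
by move: ijNs; rewrite [ij]surjective_pairing e1 e2 -surjective_pairing mem_nth.
Qed.

Lemma dim_delta_span (E : {set 'I_m * 'I_n}) : \dim (delta_span E) = #|E|.
Proof.
by rewrite /delta_span (eqP (free_delta_seq (enum_uniq _))) size_map cardE.
Qed.

End DeltaSpan.

Section KronOnes.
Variables (K : pzRingType) (m n p q : nat) (A : 'M[K]_(m, n)) (B : 'M[K]_(p, q)).

Definition kron_pair (x : ('I_m * 'I_n) * ('I_p * 'I_q)) : 'I_(m * p) * 'I_(n * q) :=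
  (mxtens_index (x.1.1, x.2.1), mxtens_index (x.1.2, x.2.2)).

Lemma kron_pair_inj : injective kron_pair.
Proof.
move=> x y /(congr1 (fun z => (mxtens_unindex z.1, mxtens_unindex z.2))).
rewrite /= !mxtens_indexK.
by case: x y => [[a b] [c d]] [[a' b'] [c' d']] /= [-> -> -> ->].
Qed.

Lemma kron_pair_ones : kron_pair @: setX (ones A) (ones B) \subset ones (A *t B).
Proof.
apply/subsetP => xy /imsetP[[[a b] [c d]]]; rewrite !inE /= => /andP[/eqP Aab /eqP Bcd] ->.
by rewrite tensmxE Aab Bcd mulr1.
Qed.

Lemma card_kron_pair_ones :
  #|kron_pair @: setX (ones A) (ones B)| = (#|ones A| * #|ones B|)%N.
Proof. by rewrite card_imset ?cardsX //; apply: kron_pair_inj. Qed.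

Lemma card_ones_tens :
  (forall i j k l, A i j * B k l = 1 -> A i j = 1) ->
  #|ones (A *t B)| = (#|ones A| * #|ones B|)%N.
Proof.
move=> factor1; rewrite -card_kron_pair_ones.
suff -> : ones (A *t B) = kron_pair @: setX (ones A) (ones B) by [].
apply/eqP; rewrite eq_sym eqEsubset kron_pair_ones; apply/subsetP => -[x y]; rewrite inE /=.
case: (mxtens_indexP x) => i k; case: (mxtens_indexP y) => j l.
rewrite tensmxE => /eqP ABij; have Aij := factor1 _ _ _ _ ABij.
move: ABij; rewrite Aij mul1r => Bkl.
by apply/imsetP; exists ((i, j), (k, l)); rewrite ?inE /= ?Aij ?Bkl ?eqxx.
Qed.

Lemma card_ones_tens_gt i j k l : A i j * B k l = 1 -> A i j != 1 ->
  (#|ones A| * #|ones B| < #|ones (A *t B)|)%N.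
Proof.
move=> ABij Aij_neq1; rewrite -card_kron_pair_ones; apply: proper_card.
rewrite properE kron_pair_ones /=; apply/subsetPn; exists (kron_pair ((i, j), (k, l))).
  by rewrite inE /= tensmxE ABij.
apply/imsetP => -[y]; rewrite !inE => /andP[/eqP Ay _] /kron_pair_inj y_eq.
by rewrite -y_eq /= in Ay; rewrite Ay eqxx in Aij_neq1.
Qed.

End KronOnes.

Lemma lfun_linearE (K : fieldType) (aT rT : vectType K) (f : aT -> rT) :
  linear f -> linfun f =1 f.
Proof.
move=> f_lin; pose fL : {linear aT -> rT} := HB.pack f (GRing.isLinear.Build _ _ _ _ f f_lin).
exact: (lfunE fL).
Qed.


Section CharTableDefect.
Variables (R : realType) (n : nat) (W : 'M[R[i]]_n).
Variables (s : 'I_n -> 'I_n -> 'I_n) (t : 'I_n -> 'I_n).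
Hypothesis n_gt0 : (0 < n)%N.
Hypothesis W_sym : forall i j, W i j = W j i.
Hypothesis W_unit : forall i j, W i j * conjc (W i j) = 1.
Hypothesis W_mul : forall a b c, W (s a b) c = W a c * W b c.
Hypothesis W_conj : forall a c, W (t a) c = conjc (W a c).
Hypothesis W_orth : forall a b, \sum_c W a c * conjc (W b c) = (a == b)%:R * n%:R.

Let n_neq0 : (n%:R : R[i]) != 0.
Proof. by rewrite pnatr_eq0 -lt0n. Qed.

Lemma char_row_inj x y : (forall c, W x c = W y c) -> x = y.
Proof.
move=> Wxy; apply/eqP; have := W_orth x y.
under eq_bigr do rewrite -Wxy W_unit.
rewrite sumr_const card_ord; case: eqP => // _; rewrite mul0r => /eqP.
by rewrite (negPf n_neq0).
Qed.

Lemma s_tK b v : s (s b v) (t v) = b.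
Proof. by apply: char_row_inj => c; rewrite !W_mul W_conj -mulrA W_unit mulr1. Qed.

Lemma s_tKC a b : s b (s a (t b)) = a.
Proof. by apply: char_row_inj => c; rewrite !W_mul W_conj mulrCA W_unit mulr1. Qed.

Lemma W_tt e v : W (t e) (t v) = W e v.
Proof. by rewrite W_conj W_sym W_conj conjcK W_sym. Qed.

Definition complexify (Rm : 'M[R]_n) : 'M[R[i]]_n := map_mx (fun r => r%:C) Rm.

Definition sandwich (Rm : 'M[R]_n) : 'M[R[i]]_n := W *m complexify Rm *m W.

Definition defect (Rm : 'M[R]_n) a b :=
  \sum_c (Rm a c - Rm b c)%:C * (W a c * conjc (W b c)).

Lemma antiherm_defectE Rm : antiherm_defect W Rm =
  (\matrix_(a, b) complex.Re ('i * defect Rm a b),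
   \matrix_(a, b) complex.Im ('i * defect Rm a b)).
Proof.
rewrite /antiherm_defect /=; set X := hadamard _ _ *m _.
have XE a b : X a b = \sum_c 'i * (Rm a c)%:C * (W a c * conjc (W b c)).
  rewrite mxE; apply: eq_bigr => c _; rewrite !mxE mulrA; congr (_ * _ * _).
  by apply/eqP; rewrite eq_complex /=; apply/andP; split; apply/eqP; ring.
have conj_i : conjc ('i : R[i]) = - 'i by apply/eqP; rewrite eq_complex /= oppr0 !eqxx.
have HE a b : (X + adjmx X) a b = 'i * defect Rm a b.
  rewrite mxE XE {1}/adjmx [Y in _ + Y]mxE [Y in _ + Y]mxE XE conjc_sum -big_split /=.
  rewrite /defect mulr_sumr; apply: eq_bigr => c _.
  by rewrite !conjcM conj_i conjc_real conjcK rmorphB; ring.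
by congr pair; apply/matrixP => a b; rewrite [LHS]mxE [RHS]mxE HE.
Qed.

Lemma defect_linear (a : R) x y i j :
  defect (a *: x + y) i j = a%:C * defect x i j + defect y i j.
Proof.
rewrite /defect mulr_sumr -big_split; apply: eq_bigr => c _.
by rewrite !mxE !rmorphB !rmorphD !rmorphM /=; ring.
Qed.

Lemma antiherm_defect_linear : linear (antiherm_defect W).
Proof.
move=> a x y; rewrite !antiherm_defectE /=; congr pair; apply/matrixP => i j.
all: by rewrite !mxE defect_linear mulrDr mulrCA ?ReMD ?ImMD.
Qed.

Lemma antiherm_defect_eq0 Rm :
  antiherm_defect W Rm = 0 <-> forall a b, defect Rm a b = 0.
Proof.
rewrite antiherm_defectE; split => [[/matrixP ReD0 /matrixP ImD0] a b | D0].
  have /eqP : 'i * defect Rm a b = 0.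
    by apply: complex_eq0; [have := ReD0 a b | have := ImD0 a b]; rewrite !mxE.
  by rewrite mulf_eq0 (negPf (neq0Ci _)) => /eqP.
by congr pair; apply/matrixP => a b; rewrite !mxE D0 mulr0.
Qed.

Lemma sandwichE Rm e v : sandwich Rm e v = \sum_a \sum_c W e a * (Rm a c)%:C * W c v.
Proof.
rewrite /sandwich mxE; under eq_bigr do rewrite mxE mulr_suml.
by rewrite exchange_big; apply: eq_bigr => a _; apply: eq_bigr => c _; rewrite mxE.
Qed.

(* Reindexing the row [b] as [s b v] turns the sum defining [sandwich Rm e v] into
   [conjc (W e v)] times itself. *)
Lemma sandwich_defect Rm e v :
  (conjc (W e v) - 1) * sandwich Rm e v = \sum_b W e b * defect Rm (s b v) b.
Proof.
have termE b : W e b * defect Rm (s b v) b =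
    \sum_c W e b * (Rm (s b v) c)%:C * W c v - \sum_c W e b * (Rm b c)%:C * W c v.
  rewrite /defect mulr_sumr -sumrB; apply: eq_bigr => c _.
  have -> : W (s b v) c * conjc (W b c) = W c v by rewrite W_mul mulrAC W_unit mul1r W_sym.
  by rewrite rmorphB /=; ring.
rewrite (eq_bigr _ (fun b _ => termE b)) sumrB -sandwichE mulrBl mul1r; congr (_ - _).
have s_inj : injective (s^~ v) by move=> x y /= xy; rewrite -(s_tK x v) xy s_tK.
pose G a := \sum_c W e (s a (t v)) * (Rm a c)%:C * W c v.
rewrite (eq_bigr (fun b => G (s b v))) => [|b _]; last by rewrite /G s_tK.
have -> : \sum_b G (s b v) = \sum_a G a by rewrite [RHS](reindex_inj s_inj).
rewrite sandwichE mulr_sumr; apply: eq_bigr => a _.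
rewrite /G mulr_sumr; apply: eq_bigr => c _.
by rewrite [W e (s _ _)]W_sym W_mul W_conj (W_sym v e) (W_sym a e); ring.
Qed.

Lemma defect_sandwich Rm b' v :
  \sum_e conjc (W b' e) * ((conjc (W e v) - 1) * sandwich Rm e v)
    = n%:R * defect Rm (s b' v) b'.
Proof.
under eq_bigr do rewrite sandwich_defect mulr_sumr.
rewrite exchange_big /=.
have sum_rowE b : \sum_e conjc (W b' e) * (W e b * defect Rm (s b v) b)
    = ((b == b')%:R * n%:R) * defect Rm (s b v) b.
  by rewrite -W_orth mulr_suml; apply: eq_bigr => e _; rewrite (W_sym e b); ring.
under eq_bigr do rewrite sum_rowE.
rewrite (bigD1 b') //= eqxx mul1r big1 ?addr0 // => b /negPf ->.
by rewrite !mul0r.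
Qed.

Lemma defect_eq0_sandwich Rm : (forall a b, defect Rm a b = 0) <->
  (forall e v, W e v != 1 -> sandwich Rm e v = 0).
Proof.
split => [D0 e v Wev_neq1 | S0 a b].
  have := sandwich_defect Rm e v; rewrite big1 => [|b _]; last by rewrite D0 mulr0.
  move/eqP; rewrite mulf_eq0 => /orP[|/eqP //]; rewrite subr_eq0 => /eqP Wev1.
  by move: Wev_neq1; rewrite -[W e v]conjcK Wev1 rmorph1 eqxx.
rewrite -{1}(s_tKC a b); have := defect_sandwich Rm b (s a (t b)).
rewrite big1 => [/esym/eqP | e _]; first by rewrite mulf_eq0 (negPf n_neq0) => /eqP.
have [-> | Wev_neq1] := eqVneq (W e (s a (t b))) 1.
  by rewrite rmorph1 subrr !mul0r mulr0.
by rewrite S0 // !mulr0.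
Qed.

Lemma conj_sandwich Rm e v : conjc (sandwich Rm e v) = sandwich Rm (t e) (t v).
Proof.
rewrite !sandwichE conjc_sum; apply: eq_bigr => a _; rewrite conjc_sum.
apply: eq_bigr => c _.
by rewrite !conjcM conjc_real W_conj (W_sym c (t v)) W_conj (W_sym v c).
Qed.

(* [Re + Im] is real-linear, and by [conj_sandwich] it loses no information on sandwiches. *)
Definition reim_sandwich (Rm : 'M[R]_n) : 'M[R]_n :=
  \matrix_(e, v) (complex.Re (sandwich Rm e v) + complex.Im (sandwich Rm e v)).

Lemma reim_sandwichE Rm e v :
  reim_sandwich Rm e v = complex.Re (sandwich Rm e v) + complex.Im (sandwich Rm e v).
Proof. by rewrite mxE. Qed.

Lemma reim_sandwich_linear : linear reim_sandwich.
Proof.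
move=> a x y.
have sandwich_lin : sandwich (a *: x + y) = a%:C *: sandwich x + sandwich y.
  rewrite /sandwich.
  have -> : complexify (a *: x + y) = a%:C *: complexify x + complexify y.
    by apply/matrixP => k l; rewrite !mxE rmorphD rmorphM.
  by rewrite mulmxDr mulmxDl -scalemxAr -scalemxAl.
apply/matrixP => i j; rewrite [LHS]reim_sandwichE sandwich_lin.
rewrite [RHS]mxE [in RHS]mxE !reim_sandwichE.
by move: (sandwich x) (sandwich y) => Sx Sy; rewrite !mxE ReMD ImMD; ring.
Qed.

Lemma reim_sandwich_eq0_off_ones Rm :
  (forall e v, W e v != 1 -> sandwich Rm e v = 0) <->
  (forall e v, W e v != 1 -> reim_sandwich Rm e v = 0).
Proof.
split => S0 e v Wev_neq1; first by rewrite mxE S0 // addr0.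
apply: ReDIm_conj_eq0; first by have := S0 e v Wev_neq1; rewrite mxE.
by rewrite conj_sandwich; have := S0 (t e) (t v); rewrite W_tt mxE; apply.
Qed.

Lemma reim_sandwich_eq0 Rm : reim_sandwich Rm = 0 -> Rm = 0.
Proof.
move=> /matrixP RI0.
have S0 : sandwich Rm = 0.
  apply/matrixP => e v; rewrite [RHS]mxE; apply: ReDIm_conj_eq0.
    by have := RI0 e v; rewrite !mxE.
  by rewrite conj_sandwich; have := RI0 (t e) (t v); rewrite !mxE.
have W_inv : map_mx conjc W *m W = n%:R%:M.
  apply/matrixP => i j; rewrite !mxE.
  under eq_bigr do rewrite mxE (W_sym _ j) mulrC.
  by rewrite W_orth mulr_natl eq_sym.
have W_inv' : W *m map_mx conjc W = n%:R%:M.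
  apply/matrixP => i j; rewrite !mxE.
  under eq_bigr do rewrite mxE (W_sym _ j).
  by rewrite W_orth mulr_natl.
have : map_mx conjc W *m sandwich Rm *m map_mx conjc W = (n%:R * n%:R) *: complexify Rm.
  by rewrite /sandwich !mulmxA W_inv -mulmxA W_inv' mul_scalar_mx mul_mx_scalar scalerA.
rewrite S0 mulmx0 mul0mx => /esym/eqP; rewrite scaler_eq0 mulf_eq0 (negPf n_neq0) /=.
move=> /eqP/matrixP C0; apply/matrixP => i j; have := C0 i j; rewrite !mxE.
exact: complexI.
Qed.

Lemma antiherm_defect_kerP Rm : Rm \in lker (linfun (antiherm_defect W)) <->
  forall e v, W e v != 1 -> reim_sandwich Rm e v = 0.
Proof.
rewrite memv_ker lfun_linearE; last exact: antiherm_defect_linear.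
rewrite -reim_sandwich_eq0_off_ones -defect_eq0_sandwich -antiherm_defect_eq0.
by split => [/eqP | ->].
Qed.

Lemma Ddim_ones : Ddim W = #|ones W|.
Proof.
(* [reim_sandwich] is injective and maps the kernel onto the matrices supported on [ones W]. *)
set h := linfun reim_sandwich.
have hE x : h x = reim_sandwich x by rewrite lfun_linearE //; apply: reim_sandwich_linear.
have h_inj : lker h == 0%VS.
  apply/eqP/vspaceP => x; rewrite memv_ker memv0 hE.
  by apply/eqP/eqP => [/reim_sandwich_eq0 // | ->]; rewrite -hE linear0.
rewrite /Ddim -(limg_dim_eq (f := h)) ?(eqP h_inj) ?capv0 // -(dim_delta_span R (ones W)).
congr (\dim _); apply/eqP; rewrite eqEsubv; apply/andP; split.
  apply/subvP => y /memv_imgP[x /antiherm_defect_kerP x_ker ->]; rewrite hE.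
  by apply: memv_delta_span => e v; rewrite inE; apply: x_ker.
apply/span_subvP => Y /mapP[[e v]]; rewrite mem_enum inE /= => /eqP Wev1 ->.
rewrite -[delta_mx e v](lker0_lfunVK h_inj); apply/memv_img/antiherm_defect_kerP.
move=> e' v' Wev_neq1; rewrite -hE lker0_lfunVK // mxE.
by case: eqP => [ee | //]; case: eqP => [vv | //]; rewrite ee vv Wev1 eqxx in Wev_neq1.
Qed.

End CharTableDefect.

Lemma Ddim_char_table (R : realType) n (W : 'M[R[i]]_n) :
  (0 < n)%N -> char_table W -> Ddim W = #|ones W|.
Proof. by move=> n_gt0 [W_sym W_unit [s W_mul] [t W_conj] W_orth]; apply: Ddim_ones. Qed.

Lemma expr_gcdn_eq1 (K : pzRingType) (x : K) a b :
  (0 < a)%N -> x ^+ a = 1 -> x ^+ b = 1 -> x ^+ gcdn a b = 1.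
Proof.
move=> a_gt0 xa xb; have [u _ /dvdnP[q gcd_eq]] := Bezoutl b a_gt0.
have : x ^+ (gcdn a b + u * b) = 1 by rewrite gcd_eq mulnC exprM xa expr1n.
by rewrite exprD mulnC exprM xb expr1n mulr1.
Qed.

Lemma foldr_muln_gt0 ns : all (fun n => 0 < n)%N ns -> (0 < foldr muln 1%N ns)%N.
Proof. by elim: ns => //= n ns IHns /andP[n_gt0 /IHns]; rewrite muln_gt0 n_gt0. Qed.

Section FourierEntries.
Variable R : realType.

Lemma fourier_entry_unity ns i j : all (fun n => 0 < n)%N ns ->
  fourier R ns i j ^+ foldr muln 1%N ns = 1.
Proof.
elim: ns i j => [x y _ | n ns' IHns] /=; first by rewrite [x]ord1 [y]ord1 mxE.
move=> x y /andP[n_gt0 /IHns Fns'1].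
case: (mxtens_indexP x) => i k; case: (mxtens_indexP y) => j l.
have Fmat1 : Fmat R n i j ^+ n = 1 by rewrite FmatE -(zetaM R n_gt0) zetaMn.
by rewrite tensmxE exprMn exprM Fmat1 expr1n mul1r mulnC exprM Fns'1 expr1n.
Qed.

Lemma fourier_row0 ns (i j : 'I_(foldr muln 1%N ns)) : all (fun n => 0 < n)%N ns ->
  i = 0%N :> nat -> fourier R ns i j = 1.
Proof.
elim: ns i j => [x y _ _ | n ns' IHns] /=; first by rewrite [x]ord1 [y]ord1 mxE.
move=> x y /andP[n_gt0 ns'_gt0]; have N'_gt0 := foldr_muln_gt0 ns'_gt0.
case: (mxtens_indexP x) => i k; case: (mxtens_indexP y) => j l /= /eqP.
rewrite addn_eq0 muln_eq0 (gtn_eqF N'_gt0) orbF => /andP[/eqP i0 /eqP k0].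
by rewrite tensmxE IHns // FmatE i0 mul0n zeta0 mulr1.
Qed.

Lemma fourier_has_zeta ns p : all (fun n => 0 < n)%N ns -> prime p ->
  (p %| foldr muln 1%N ns)%N -> forall k, exists i j, fourier R ns i j = zeta R p k.
Proof.
elim: ns => [_ p_prime | n ns' IHns] /=.
  by rewrite dvdn1 => /eqP p1; rewrite p1 in p_prime.
move=> /andP[n_gt0 ns'_gt0] p_prime; have N'_gt0 := foldr_muln_gt0 ns'_gt0.
have p_gt0 := prime_gt0 p_prime; pose o := Ordinal N'_gt0.
rewrite Euclid_dvdM // => /orP[p_dvd_n | p_dvd_N'] k; last first.
  have [i [j Fij]] := IHns ns'_gt0 p_prime p_dvd_N' k.
  exists (mxtens_index (Ordinal n_gt0, i)), (mxtens_index (Ordinal n_gt0, j)).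
  by rewrite tensmxE FmatE /= mul0n zeta0 mul1r.
(* The entry of [F_n] at row [n %/ p] and column [k %% p] is [zeta p k]. *)
have np_lt : (n %/ p < n)%N by rewrite ltn_Pdiv ?prime_gt1.
have kp_lt : (k %% p < n)%N by apply: leq_trans (ltn_pmod k p_gt0) (dvdn_leq n_gt0 p_dvd_n).
exists (mxtens_index (Ordinal np_lt, o)), (mxtens_index (Ordinal kp_lt, o)).
rewrite tensmxE fourier_row0 // mulr1 FmatE /= (zeta_mod R p_gt0 k).
have np_gt0 : (0 < n %/ p)%N by rewrite divn_gt0 // dvdn_leq.
rewrite /zeta; congr cexp; rewrite -{2}(divnK p_dvd_n) !natrM; field.
by rewrite !pnatr_eq0 -!lt0n p_gt0 np_gt0.
Qed.

End FourierEntries.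

Theorem lemma5p6 (R : realType) (ns ms : seq nat) :
  all (fun n => 0 < n)%N ns -> all (fun m => 0 < m)%N ms ->
  let N := foldr muln 1%N ns in
  let M := foldr muln 1%N ms in
  (coprime M N ->
     Ddim (fourier R ns *t fourier R ms) = (Ddim (fourier R ns) * Ddim (fourier R ms))%N) /\
  ((1 < gcdn M N)%N ->
     (Ddim (fourier R ns) * Ddim (fourier R ms) < Ddim (fourier R ns *t fourier R ms))%N).
Proof.
move=> ns_gt0 ms_gt0 N M.
have N_gt0 : (0 < N)%N := foldr_muln_gt0 ns_gt0.
have M_gt0 : (0 < M)%N := foldr_muln_gt0 ms_gt0.
have F_char := fourier_char_table R ns_gt0; have G_char := fourier_char_table R ms_gt0.
rewrite (Ddim_char_table N_gt0 F_char) (Ddim_char_table M_gt0 G_char).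
rewrite (Ddim_char_table _ (char_table_tens F_char G_char)) ?muln_gt0 ?N_gt0 //.
split => [coprime_MN | gcd_gt1].
  apply: card_ones_tens => i j k l FG1.
  have FM1 : fourier R ns i j ^+ M = 1.
    have := congr1 (fun z => z ^+ M) FG1.
    by rewrite exprMn fourier_entry_unity // mulr1 expr1n.
  have := expr_gcdn_eq1 M_gt0 FM1 (fourier_entry_unity R i j ns_gt0).
  by rewrite (eqP coprime_MN) expr1.
pose p := pdiv (gcdn M N); have p_prime : prime p := pdiv_prime gcd_gt1.
have p_gt0 := prime_gt0 p_prime; have p_dvd_gcd : (p %| gcdn M N)%N := pdiv_dvd _.
have p_dvd_N := dvdn_trans p_dvd_gcd (dvdn_gcdr M N).
have p_dvd_M := dvdn_trans p_dvd_gcd (dvdn_gcdl M N).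
have [i [j Fij]] := fourier_has_zeta R ns_gt0 p_prime p_dvd_N 1.
have [k [l Gkl]] := fourier_has_zeta R ms_gt0 p_prime p_dvd_M p.-1.
apply: (@card_ones_tens_gt _ _ _ _ _ _ _ i j k l); rewrite Fij ?Gkl.
  by rewrite -zetaD add1n prednK // -[p in zeta _ _ p]mul1n (zetaMn R p_gt0).
by rewrite zeta_neq1 // prime_gt1.
Qed.
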